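(* Let $T$ be a chain all of whose entries lie in $\{1,2\}$, which contains the chain $[212]$, and which is not equal to $[212]$ itself. Then $\mathcal{Z}(T)\le\tfrac13$.
   Context: A chain is a finite sequence $T=[a_1a_2\dots a_n]$ of positive integers ($n\ge1$). For a chain $S=[s_1\dots s_m]$ write $\rho_S=[0;s_1,\dots,s_m]$ (with $\rho_\emptyset=0$ for the empty chain), and $[s_1;s_2,\dots,s_m]$ for the finite continued fraction, which equals $1/\rho_S$. Define $\mathcal{Z}(T)=\big(\max_{1\le i\le n}([a_i;a_{i+1},\dots,a_n]+[0;a_{i-1},\dots,a_1])\big)^{-1}$, where for $i=1$ the second summand is $0$. A chain contains the chain $[c_1\dots c_k]$ if it has consecutive entries $c_1,\dots,c_k$. *)

From HB Require Import structures.
From mathcomp Require Import all_boot all_order all_algebra.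
Set Implicit Arguments. Unset Strict Implicit. Unset Printing Implicit Defensive.
Import Order.TTheory GRing.Theory Num.Theory.
Local Open Scope ring_scope.

Definition is_chain (T : seq nat) : bool := (size T > 0)%N && all (fun a => 0 < a)%N T.

Fixpoint cf0 (S : seq nat) : rat :=
  match S with
  | [::] => 0
  | s :: S' => (s%:R + cf0 S')^-1
  end.

Definition cfi (S : seq nat) : rat :=
  match S with
  | [::] => 0
  | s :: S' => s%:R + cf0 S'
  end.

(* Z(T) = (max_{1<=i<=n} ([a_i; a_{i+1},...,a_n] + [0; a_{i-1},...,a_1]))^-1.
   With 0-based index i: drop i T = [a_{i+1} ... a_n], rev (take i T) = [a_i ... a_1]. *)
Definition Zc (T : seq nat) : rat :=
  (\big[Num.max/0]_(i < size T) (cfi (drop i T) + cf0 (rev (take i T))))^-1.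

From HB Require Import structures.
From mathcomp Require Import all_boot all_order all_algebra.
From mathcomp Require Import lra.
Import Order.TTheory GRing.Theory Num.Theory.
Local Open Scope ring_scope.

(* Some occurrence of [2 1 2] has a neighbour a on one side; at the 2 next to
   that neighbour the two continued fractions are at least
   [2; a, ...] >= 2 + 1/3 and [0; 1, 2, ...] >= 2/3, so the maximum defining
   the inverse of Z(T) is at least 3. *)

Definition Zterm (T : seq nat) (i : nat) : rat :=
  cfi (drop i T) + cf0 (rev (take i T)).

Lemma Zc_le_inv (T : seq nat) (i : nat) (c : rat) :
  (i < size T)%N -> 0 < c -> c <= Zterm T i -> Zc T <= c^-1.
Proof.
move=> ltiT c_gt0 le_cZ.
have le_Z_max : Zterm T i <= \big[Num.max/0]_(j < size T) Zterm T j.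
  exact: (Order.TotalTheory.le_bigmax _ (fun j : 'I_(size T) => Zterm T j) (Ordinal ltiT)).
have le_c_max := le_trans le_cZ le_Z_max.
by rewrite /Zc lef_pV2 ?posrE //; lra.
Qed.

Lemma Zterm_cat (l r : seq nat) (x : nat) :
  Zterm (l ++ x :: r) (size l) = x%:R + cf0 r + cf0 (rev l).
Proof. by rewrite /Zterm drop_size_cat // take_size_cat. Qed.

Lemma Zc_cat_le_inv (l r : seq nat) (x : nat) (c : rat) :
  0 < c -> c <= x%:R + cf0 r + cf0 (rev l) -> Zc (l ++ x :: r) <= c^-1.
Proof.
move=> c_gt0 le_c; apply: (@Zc_le_inv _ (size l)) => //; last by rewrite Zterm_cat.
by rewrite size_cat addnS ltnS leq_addr.
Qed.

Lemma cf0_ge0 (S : seq nat) : 0 <= cf0 S.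
Proof. by elim: S => [|s S IH] //=; rewrite invr_ge0 addr_ge0. Qed.

Lemma cf0_cons_le {a : nat} (S : seq nat) : (0 < a)%N -> cf0 (a :: S) <= a%:R^-1.
Proof.
move=> a_gt0; have cf0S_ge0 := cf0_ge0 S.
have a_gt0' : 0 < a%:R :> rat by rewrite ltr0n.
by rewrite /= lef_pV2 ?posrE //; lra.
Qed.

Lemma cf0_le1 (S : seq nat) : all (fun a => 0 < a)%N S -> cf0 S <= 1.
Proof.
case: S => [|s S] // /andP[s_gt0 _].
by apply: le_trans (cf0_cons_le S s_gt0) _; rewrite invf_le1 ?ler1n ?ltr0n.
Qed.

Lemma cf0_cons_ge {a : nat} {S : seq nat} :
  (0 < a)%N -> all (fun a => 0 < a)%N S -> (a%:R + 1)^-1 <= cf0 (a :: S).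
Proof.
move=> a_gt0 /cf0_le1 cf0S_le1; have cf0S_ge0 := cf0_ge0 S.
have a_gt0' : 0 < a%:R :> rat by rewrite ltr0n.
by rewrite /= lef_pV2 ?posrE //; lra.
Qed.

Lemma two_third_le_cf0_12 (S : seq nat) : 2 / 3 <= cf0 [:: 1%N, 2%N & S].
Proof.
have cf0_ge0_2S := cf0_ge0 (2%N :: S).
have cf0_le_half : cf0 (2%N :: S) <= 2^-1 := @cf0_cons_le 2 S isT.
change (2 / 3 <= (1 + cf0 (2%N :: S))^-1).
by rewrite -invf_div lef_pV2 ?posrE; lra.
Qed.

Lemma three_le_2_cf0_12_cf0 (a : nat) (S S' : seq nat) :
  (0 < a <= 2)%N -> all (fun a => 0 < a)%N S' ->
  3 <= 2%:R + cf0 [:: 1%N, 2%N & S] + cf0 (a :: S').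
Proof.
case/andP=> a_gt0 a_le2 S'_pos.
have le_cf0_12 := two_third_le_cf0_12 S.
have le_cf0_a := cf0_cons_ge a_gt0 S'_pos.
have a_le2' : a%:R <= 2 :> rat by rewrite (ler_nat _ a 2).
have a_gt0' : 0 < a%:R :> rat by rewrite ltr0n.
have : 3^-1 <= (a%:R + 1)^-1 :> rat by rewrite lef_pV2 ?posrE //; lra.
lra.
Qed.

Theorem lemma3p2 (T : seq nat) :
  is_chain T ->
  all (fun a => (a == 1)%N || (a == 2)%N) T ->
  infix [:: 2; 1; 2]%N T ->
  T != [:: 2; 1; 2]%N ->
  Zc T <= 1 / 3.
Proof.
move=> /andP[_ T_pos] T_12 /infixP[p [q defT]] T_ne212.
have entry_12 a : a \in T -> (0 < a <= 2)%N.
  by move=> /(allP T_12) /orP[] /eqP ->.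
rewrite div1r; move: T_pos; rewrite defT !all_cat => /and3P[p_pos _ q_pos].
case: q defT q_pos => [|a q] defT.
- case/lastP: p defT p_pos => [|p a] defT; first by rewrite defT cats0 eqxx in T_ne212.
  rewrite all_rcons => /andP[_ p_pos] _.
  apply: Zc_cat_le_inv; first exact: ltr0n.
  rewrite rev_rcons.
  apply: three_le_2_cf0_12_cf0; rewrite ?all_rev // entry_12 // defT.
  by rewrite mem_cat mem_rcons mem_head.
- case/andP=> _ q_pos.
  rewrite (catA p [:: 2; 1]%N [:: 2, a & q]%N).
  apply: Zc_cat_le_inv; first exact: ltr0n.
  rewrite rev_cat addrAC.
  apply: three_le_2_cf0_12_cf0 => //; rewrite entry_12 // defT.
  by rewrite !mem_cat !inE eqxx !orbT.
Qed.
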